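(* Let $d\ge1$, $P\subseteq\mathbb R\times[d]$ and $k\in[d]$. The colorful Helly number of $(P,\mathcal C_{\equiv}(P))$ with respect to $k$-intersecting satisfies $h_{ck}(P,\mathcal C_{\equiv}(P))\le 2d-k+1$. That is, for any finite families $\mathcal C_1,\dots,\mathcal C_{2d-k+1}\subseteq\mathcal C_{\equiv}(P)$ such that every colorful tuple $C_1\in\mathcal C_1,\dots,C_{2d-k+1}\in\mathcal C_{2d-k+1}$ is $k$-intersecting, some family $\mathcal C_i$ is $k$-intersecting.
   Context: $[d]=\{1,\dots,d\}$. A (separated) $d$-interval is a set $I=\bigcup_{i\in[d]}\{(x,i): x\in I^{(i)}\}\subseteq\mathbb R\times[d]$ with each $I^{(i)}\subseteq\mathbb R$ convex (possibly empty); points $(x,i)$ lie in the $i$-th level. For $P\subseteq\mathbb R\times[d]$, $\mathcal C_{\equiv}(P)=\{I\cap P: I \text{ a } d\text{-interval}\}$. A collection of sets of $\mathcal C_{\equiv}(P)$ $k$-intersects (is $k$-intersecting) if its intersection contains at least $k$ points of $P$ lying in $k$ distinct levels. $h_{ck}(P,\mathcal C_{\equiv}(P))$ is the minimal $n$ such that for any $n$ finite families $\mathcal F_1,\dots,\mathcal F_n\subseteq\mathcal C_{\equiv}(P)$ in which every colorful $n$-tuple ($C_i\in\mathcal F_i$) is $k$-intersecting, some $\mathcal F_i$ is $k$-intersecting. *)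

From Stdlib Require Import Reals List Arith.
Import ListNotations.
Open Scope R_scope.

(* A point (x,i) of R x [d]; level i is a natural number, [d] = {1,...,d}. *)
Definition point := (R * nat)%type.
Definition pset := point -> Prop.

Definition convexR (S : R -> Prop) : Prop :=
  forall x y z, S x -> S z -> x <= y -> y <= z -> S y.

Definition is_d_interval (d : nat) (I : nat -> R -> Prop) : Prop :=
  forall i, (1 <= i <= d)%nat -> convexR (I i).

Definition d_interval_set (d : nat) (I : nat -> R -> Prop) : pset :=
  fun p => (1 <= snd p <= d)%nat /\ I (snd p) (fst p).

Definition in_C_equiv (d : nat) (P : pset) (C : pset) : Prop :=
  exists I, is_d_interval d I /\
    forall p, C p <-> (d_interval_set d I p /\ P p).

Definition k_intersecting (P : pset) (k : nat) (coll : list pset) : Prop :=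
  exists pts : list point,
    length pts = k /\ NoDup (map snd pts) /\
    (forall p, In p pts -> P p /\ forall C, In C coll -> C p).

(* On each level, the traces of the sets of one family are convex within that
   level of P, so by Helly's theorem on the line a family without a common
   point at level l contains two members that are already disjoint there; two
   such families even contain a disjoint colorful pair.  If no family
   k-intersects, every family has a common point on at most k - 1 levels,
   hence lacks one on s = d - k + 1 levels.  Among 2d - k + 1 = d + s families
   two always share a level they lack, so greedily s times we pick a colorful
   pair disjoint at a fresh level, using up two fresh families.  Completing
   this to a colorful tuple, its intersection misses these s levels, which
   leaves only k - 1 < k levels for it. *)

From Stdlib Require Import Reals List Arith Lra Lia Classical Permutation.
Import ListNotations.

Local Open Scope R_scope.

Definition convex_in (Q S : R -> Prop) : Prop :=
  (forall x, S x -> Q x) /\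
  (forall a m b, S a -> S b -> a <= m <= b -> Q m -> S m).

Definition between (a m b : R) : Prop := a <= m <= b \/ b <= m <= a.

Lemma convex_in_between Q S a m b :
  convex_in Q S -> S a -> S b -> between a m b -> Q m -> S m.
Proof. intros [_ HS] Ha Hb [Hm | Hm] Hq; eauto. Qed.

Lemma between_three x y z : between y x z \/ between x y z \/ between x z y.
Proof.
  unfold between.
  destruct (Rle_or_lt x y), (Rle_or_lt y z), (Rle_or_lt x z); lra.
Qed.

Lemma convex_in_triple Q A B C :
  convex_in Q A -> convex_in Q B -> convex_in Q C ->
  (forall x, A x -> B x -> C x) \/ (forall x, A x -> C x -> B x) \/
  (forall x, B x -> C x -> A x).
Proof.
  intros hA hB hC.
  destruct (classic (exists x, A x /\ B x /\ ~ C x)) as [(x & Ax & Bx & nCx) | nAB].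
  2: { left; intros x Ax Bx; apply NNPP; intro; apply nAB; eauto. }
  destruct (classic (exists y, A y /\ C y /\ ~ B y)) as [(y & Ay & Cy & nBy) | nAC].
  2: { right; left; intros y Ay Cy; apply NNPP; intro; apply nAC; eauto. }
  right; right; intros z Bz Cz; apply NNPP; intro nAz.
  (* Whichever of x, y, z lies in the middle belongs to the set containing the
     other two. *)
  destruct (between_three x y z) as [Hx | [Hy | Hz]].
  - exact (nCx (convex_in_between Q C y x z hC Cy Cz Hx (proj1 hA x Ax))).
  - exact (nBy (convex_in_between Q B x y z hB Bx Bz Hy (proj1 hA y Ay))).
  - exact (nAz (convex_in_between Q A x z y hA Ax Ay Hz (proj1 hB z Bz))).
Qed.

Lemma convex_in_helly_pair {X : Type} (S : X -> R -> Prop) Q (C0 : X) (G : list X) :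
  (forall C, In C (C0 :: G) -> convex_in Q (S C)) ->
  exists A B, In A (C0 :: G) /\ In B (C0 :: G) /\
    forall x, S A x -> S B x -> forall C, In C (C0 :: G) -> S C x.
Proof.
  revert C0; induction G as [|C1 G IH]; intros C0 hG.
  - exists C0, C0; repeat split; try now left.
    intros x Hx _ C [<- | []]; exact Hx.
  - destruct (IH C1) as (A & B & iA & iB & hAB).
    { intros C iC; apply hG; right; exact iC. }
    destruct (convex_in_triple Q (S A) (S B) (S C0))
      as [H | [H | H]]; try (apply hG; simpl in *; tauto).
    + exists A, B; repeat split; try (right; assumption).
      intros x Ax Bx C [<- | iC]; auto.
    + exists A, C0; repeat split; try (now right); try (now left).
      intros x Ax Cx C [<- | iC]; auto.
    + exists B, C0; repeat split; try (now right); try (now left).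
      intros x Bx Cx C [<- | iC]; auto.
Qed.

Lemma convex_in_disjoint_sides Q A B :
  convex_in Q A -> convex_in Q B -> (forall x, A x -> B x -> False) ->
  (forall a b, A a -> B b -> a < b) \/ (forall a b, A a -> B b -> b < a).
Proof.
  intros hA hB disj.
  destruct (classic (exists a b, A a /\ B b /\ b <= a)) as [(a & b & Aa & Bb & ba) | nba].
  2: { left; intros a b Aa Bb; apply Rnot_le_lt; intro; apply nba; eauto. }
  right; intros a' b' Aa' Bb'; apply Rnot_le_lt; intro ab'.
  destruct (Rle_or_lt a' b).
  - apply (disj b); [|exact Bb].
    apply (convex_in_between Q A a' b a); auto; [left; lra | exact (proj1 hB b Bb)].
  - destruct (Rle_or_lt a b').
    + apply (disj a); [exact Aa|].
      apply (convex_in_between Q B b a b'); auto; [left; lra | exact (proj1 hA a Aa)].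
    + apply (disj a'); [exact Aa'|].
      apply (convex_in_between Q B b a' b'); auto; [left; lra | exact (proj1 hA a' Aa')].
Qed.

Lemma convex_in_colorful_pair {X : Type} (S : X -> R -> Prop) Q (G1 G2 : list X) :
  G1 <> [] -> G2 <> [] ->
  (forall C, In C G1 -> convex_in Q (S C)) ->
  (forall C, In C G2 -> convex_in Q (S C)) ->
  (forall x, ~ (forall C, In C G1 -> S C x)) ->
  (forall x, ~ (forall C, In C G2 -> S C x)) ->
  exists A B, In A G1 /\ In B G2 /\ forall x, S A x -> S B x -> False.
Proof.
  intros ne1 ne2 cv1 cv2 empty1 empty2.
  destruct G1 as [|C1 G1]; [congruence|]; destruct G2 as [|C2 G2]; [congruence|].
  destruct (convex_in_helly_pair S Q C1 G1 cv1) as (A1 & B1 & iA1 & iB1 & H1).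
  destruct (convex_in_helly_pair S Q C2 G2 cv2) as (A2 & B2 & iA2 & iB2 & H2).
  assert (disj1 : forall x, S A1 x -> S B1 x -> False) by (intros x ? ?; apply (empty1 x); auto).
  assert (disj2 : forall x, S A2 x -> S B2 x -> False) by (intros x ? ?; apply (empty2 x); auto).
  apply NNPP; intro none.
  assert (meet : forall A B, In A (C1 :: G1) -> In B (C2 :: G2) -> exists x, S A x /\ S B x).
  { intros A B iA iB; apply NNPP; intro nx; apply none.
    exists A, B; repeat split; auto; intros x ? ?; apply nx; eauto. }
  destruct (meet A1 A2 iA1 iA2) as (p & p1 & p2), (meet B1 A2 iB1 iA2) as (q & q1 & q2),
    (meet A1 B2 iA1 iB2) as (r & r1 & r2), (meet B1 B2 iB1 iB2) as (t & t1 & t2).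
  (* A1 lies on one side of B1 and A2 on one side of B2; each combination of
     sides contradicts the order of two of the meeting points p, q, r, t. *)
  destruct (convex_in_disjoint_sides Q _ _ (cv1 A1 iA1) (cv1 B1 iB1) disj1) as [s1 | s1],
    (convex_in_disjoint_sides Q _ _ (cv2 A2 iA2) (cv2 B2 iB2) disj2) as [s2 | s2].
  - pose proof (s1 r q r1 q1); pose proof (s2 q r q2 r2); lra.
  - pose proof (s1 p t p1 t1); pose proof (s2 p t p2 t2); lra.
  - pose proof (s1 p t p1 t1); pose proof (s2 p t p2 t2); lra.
  - pose proof (s1 r q r1 q1); pose proof (s2 q r q2 r2); lra.
Qed.

Lemma in_C_equiv_sub d P C p : in_C_equiv d P C -> C p -> P p.
Proof. intros (I & _ & hC) Cp; apply hC in Cp; tauto. Qed.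

Lemma in_C_equiv_level d P C l :
  in_C_equiv d P C -> (1 <= l <= d)%nat ->
  convex_in (fun x => P (x, l)) (fun x => C (x, l)).
Proof.
  intros (I & hI & hC) hl; split.
  - intros x Cx; exact (in_C_equiv_sub d P C _ (ex_intro _ I (conj hI hC)) Cx).
  - intros a m b Ca Cb hm Pm.
    apply hC in Ca as [[_ Ia] _]; apply hC in Cb as [[_ Ib] _].
    apply hC; repeat split; simpl in *; try lia.
    + exact (hI l hl a m b Ia Ib (proj1 hm) (proj2 hm)).
    + exact Pm.
Qed.

Lemma in_C_equiv_colorful_pair d P l (G1 G2 : list pset) :
  (1 <= l <= d)%nat -> G1 <> [] -> G2 <> [] ->
  (forall C, In C G1 -> in_C_equiv d P C) -> (forall C, In C G2 -> in_C_equiv d P C) ->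
  ~ (exists x, forall C, In C G1 -> C (x, l)) ->
  ~ (exists x, forall C, In C G2 -> C (x, l)) ->
  exists A B, In A G1 /\ In B G2 /\ forall x, A (x, l) -> B (x, l) -> False.
Proof.
  intros hl ne1 ne2 h1 h2 n1 n2.
  apply (convex_in_colorful_pair (fun C x => C (x, l)) (fun x => P (x, l))); auto.
  - intros C iC; exact (in_C_equiv_level d P C l (h1 C iC) hl).
  - intros C iC; exact (in_C_equiv_level d P C l (h2 C iC) hl).
  - intros x H; apply n1; eauto.
  - intros x H; apply n2; eauto.
Qed.

Local Open Scope nat_scope.

Section Counting.

Context {A : Type} (eq_dec : forall x y : A, {x = y} + {x <> y}).
Notation rm := (remove eq_dec).

Lemma NoDup_rm x L : NoDup L -> NoDup (rm x L).
Proof.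
  induction 1 as [|a L naL _ IH]; simpl; [constructor|].
  destruct (eq_dec x a); [exact IH|].
  constructor; [|exact IH].
  intro h; apply in_remove in h; tauto.
Qed.

Lemma length_rm_NoDup x L : NoDup L -> length L <= S (length (rm x L)).
Proof.
  intro ndL; apply (NoDup_incl_length ndL (l' := x :: rm x L)).
  intros y iy; destruct (eq_dec y x) as [-> | ne]; [left | right]; auto.
  apply in_in_remove; auto.
Qed.

Lemma pigeonhole_rel {B : Type} (R : B -> A -> Prop) (l1 : list B) : forall l2,
  NoDup l1 -> length l2 < length l1 ->
  (forall b, In b l1 -> exists a, In a l2 /\ R b a) ->
  exists a b b', In a l2 /\ In b l1 /\ In b' l1 /\ b <> b' /\ R b a /\ R b' a.
Proof.
  induction l1 as [|b l1 IH]; intros l2 nd hlen hR; simpl in hlen; [lia|].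
  inversion nd as [|? ? nb nd1]; subst.
  destruct (hR b (or_introl eq_refl)) as (a & ia & Rba).
  destruct (classic (exists b', In b' l1 /\ R b' a)) as [(b' & ib' & Rb'a) | none].
  { exists a, b, b'; repeat split; simpl; auto.
    intros ->; contradiction. }
  destruct (IH (rm a l2) nd1) as (a' & c & c' & ia' & ic & ic' & ne & Rc & Rc').
  - pose proof (remove_length_lt eq_dec l2 a ia); lia.
  - intros c ic; destruct (hR c (or_intror ic)) as (a' & ia' & Rca').
    exists a'; split; [|exact Rca'].
    apply in_in_remove; [intros ->; apply none; eauto | exact ia'].
  - apply in_remove in ia'.
    exists a', c, c'; repeat split; simpl; tauto.
Qed.

Definition at_least (n : nat) (P : A -> Prop) (L : list A) : Prop :=
  exists S, NoDup S /\ incl S L /\ n <= length S /\ forall x, In x S -> P x.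

Lemma at_least_zero P L : at_least 0 P L.
Proof.
  exists []; repeat split; [constructor | intros ? [] | lia | intros ? []].
Qed.

Lemma at_least_impl n P Q L :
  at_least n P L -> (forall x, In x L -> P x -> Q x) -> at_least n Q L.
Proof.
  intros (S & ndS & iS & lS & hS) hPQ.
  exists S; repeat split; auto.
Qed.

Lemma at_least_witness n P L : at_least (S n) P L -> exists x, In x L /\ P x.
Proof.
  intros ([|x S] & _ & iS & lS & hS); simpl in lS; [lia|].
  exists x; split; [apply iS | apply hS]; left; reflexivity.
Qed.

Lemma at_least_remove n P L x : at_least (S n) P L -> at_least n P (rm x L).
Proof.
  intros (S & ndS & iS & lS & hS).
  exists (rm x S); repeat split.
  - apply NoDup_rm, ndS.
  - intros y iy; apply in_remove in iy as [iy ne].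
    apply in_in_remove; auto.
  - pose proof (length_rm_NoDup x S ndS); lia.
  - intros y iy; apply in_remove in iy; apply hS; tauto.
Qed.

Lemma at_least_cons n P L x :
  In x L -> P x -> at_least n P (rm x L) -> at_least (S n) P L.
Proof.
  intros ix Px (S & ndS & iS & lS & hS).
  exists (x :: S); repeat split; simpl.
  - constructor; [intro h; apply iS in h; exact (remove_In eq_dec L x h) | exact ndS].
  - intros y [<- | iy]; [exact ix | apply iS in iy; apply in_remove in iy; tauto].
  - lia.
  - intros y [<- | iy]; auto.
Qed.

Lemma partition_pred (P : A -> Prop) (L : list A) :
  exists G Bl, Permutation L (G ++ Bl) /\
    (forall x, In x G -> P x) /\ (forall x, In x Bl -> ~ P x).
Proof.
  induction L as [|a L (G & Bl & perm & hG & hBl)].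
  - exists [], []; repeat split; [constructor | intros ? [] | intros ? []].
  - destruct (classic (P a)) as [Pa | nPa].
    + exists (a :: G), Bl; repeat split; [now constructor | |auto].
      intros x [<- | ix]; auto.
    + exists G, (a :: Bl); repeat split; [now apply Permutation_cons_app | auto |].
      intros x [<- | ix]; auto.
Qed.

Lemma at_least_split k P L :
  NoDup L -> at_least k P L \/ at_least (length L + 1 - k) (fun x => ~ P x) L.
Proof.
  intro ndL.
  destruct (partition_pred P L) as (G & Bl & perm & hG & hBl).
  assert (ndGB : NoDup (G ++ Bl)) by exact (Permutation_NoDup perm ndL).
  assert (inL : incl (G ++ Bl) L) by (intros x ix; exact (Permutation_in _ (Permutation_sym perm) ix)).
  pose proof (Permutation_length perm) as lenL; rewrite length_app in lenL.
  destruct (le_gt_dec k (length G)); [left; exists G | right; exists Bl]; repeat split; auto.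
  - exact (NoDup_app_remove_r _ _ ndGB).
  - intros x ix; apply inL, in_or_app; left; exact ix.
  - exact (NoDup_app_remove_l _ _ ndGB).
  - intros x ix; apply inL, in_or_app; right; exact ix.
  - lia.
Qed.

Lemma at_least_disjoint_length s Q (M L : list A) :
  NoDup M -> incl M L -> (forall x, In x M -> ~ Q x) -> at_least s Q L ->
  length M + s <= length L.
Proof.
  intros ndM iM hM (S & ndS & iS & lS & hS).
  assert (nd : NoDup (M ++ S)).
  { apply NoDup_app; auto. intros x xM xS; exact (hM x xM (hS x xS)). }
  pose proof (NoDup_incl_length nd (incl_app iM iS)) as H.
  rewrite length_app in H; lia.
Qed.

End Counting.

Notation rm := (remove Nat.eq_dec).

Section GreedySeparation.

Variable X : Type.
Variable F : nat -> list X.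
Variable bad : nat -> nat -> Prop.
Variable separates : nat -> X -> X -> Prop.
Hypothesis separate_pair : forall l j1 j2, j1 <> j2 -> bad j1 l -> bad j2 l ->
  exists A B, In A (F j1) /\ In B (F j2) /\ separates l A B.

Definition separated_at (sel : nat -> X) (Js : list nat) (l : nat) : Prop :=
  exists j1 j2, In j1 Js /\ In j2 Js /\ separates l (sel j1) (sel j2).

Lemma separation_step s Js Ls l j1 j2 A B (sel' : nat -> X) :
  In l Ls -> j1 <> j2 -> In j1 Js -> In j2 Js ->
  In A (F j1) -> In B (F j2) -> separates l A B ->
  (forall j, In j (rm j1 (rm j2 Js)) -> In (sel' j) (F j)) ->
  at_least s (separated_at sel' (rm j1 (rm j2 Js))) (rm l Ls) ->
  exists sel, (forall j, In j Js -> In (sel j) (F j)) /\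
    at_least (S s) (separated_at sel Js) Ls.
Proof.
  intros il ne ij1 ij2 iA iB sepAB hsel' hsep'.
  set (Js' := rm j1 (rm j2 Js)) in *.
  assert (inJs' : forall j, In j Js' -> In j Js /\ j <> j1 /\ j <> j2).
  { intros j h; apply in_remove in h as [h h1]; apply in_remove in h as [h h2]; auto. }
  set (sel j := if Nat.eq_dec j j1 then A else if Nat.eq_dec j j2 then B else sel' j).
  assert (sel_j1 : sel j1 = A) by (unfold sel; destruct Nat.eq_dec; congruence).
  assert (sel_j2 : sel j2 = B) by (unfold sel; repeat destruct Nat.eq_dec; congruence).
  assert (sel_Js' : forall j, In j Js' -> sel j = sel' j).
  { intros j ij; apply inJs' in ij; unfold sel; repeat destruct Nat.eq_dec; tauto. }
  exists sel; split.
  - intros j ij.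
    destruct (Nat.eq_dec j j1) as [-> | ne1]; [congruence|].
    destruct (Nat.eq_dec j j2) as [-> | ne2]; [congruence|].
    assert (ij' : In j Js') by (apply in_in_remove, in_in_remove; auto).
    rewrite sel_Js'; auto.
  - apply (at_least_cons Nat.eq_dec _ _ _ _ il).
    + exists j1, j2; rewrite sel_j1, sel_j2; auto.
    + apply (at_least_impl _ _ _ _ hsep').
      intros l' _ (k1 & k2 & ik1 & ik2 & sepk).
      exists k1, k2; rewrite !sel_Js' by assumption.
      repeat split; try apply inJs'; assumption.
Qed.

Lemma greedy_separation s : forall (Js Ls : list nat) (sel0 : nat -> X),
  NoDup Js -> NoDup Ls -> length Ls + s <= length Js ->
  (forall j, In j Js -> In (sel0 j) (F j)) ->
  (forall j, In j Js -> at_least s (bad j) Ls) ->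
  exists sel, (forall j, In j Js -> In (sel j) (F j)) /\
    at_least s (separated_at sel Js) Ls.
Proof.
  induction s as [|s IH]; intros Js Ls sel0 ndJ ndL hlen hsel0 hbad.
  { exists sel0; split; [exact hsel0 | apply at_least_zero]. }
  destruct (pigeonhole_rel Nat.eq_dec bad Js Ls ndJ)
    as (l & j1 & j2 & il & ij1 & ij2 & ne & b1 & b2); [lia | |].
  { intros j ij; exact (at_least_witness _ _ _ (hbad j ij)). }
  destruct (separate_pair l j1 j2 ne b1 b2) as (A & B & iA & iB & sepAB).
  assert (inJs : forall j, In j (rm j1 (rm j2 Js)) -> In j Js).
  { intros j h; apply in_remove in h as [h _]; apply in_remove in h as [h _]; exact h. }
  destruct (IH (rm j1 (rm j2 Js)) (rm l Ls) sel0) as (sel' & hsel' & hsep').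
  - apply NoDup_rm, NoDup_rm, ndJ.
  - apply NoDup_rm, ndL.
  - pose proof (remove_length_lt Nat.eq_dec Ls l il).
    pose proof (length_rm_NoDup Nat.eq_dec j2 Js ndJ).
    pose proof (length_rm_NoDup Nat.eq_dec j1 (rm j2 Js) (NoDup_rm Nat.eq_dec j2 Js ndJ)).
    lia.
  - intros j h; apply hsel0, inJs, h.
  - intros j h; apply at_least_remove, hbad, inJs, h.
  - exact (separation_step s Js Ls l j1 j2 A B sel' il ne ij1 ij2 iA iB sepAB hsel' hsep').
Qed.

End GreedySeparation.

Lemma choose_points {A B : Type} (Q : A * B -> Prop) (L : list B) :
  (forall l, In l L -> exists x, Q (x, l)) ->
  exists pts, map snd pts = L /\ forall p, In p pts -> Q p.
Proof.
  induction L as [|l L IH]; intros H.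
  - exists []; split; [reflexivity | intros ? []].
  - destruct (H l (or_introl eq_refl)) as [x Qx].
    destruct IH as (pts & e & hpts); [intros l' h; apply H; right; exact h|].
    exists ((x, l) :: pts); split; [simpl; congruence|].
    intros p [<- | ip]; auto.
Qed.

Lemma k_intersecting_of_common_levels P k (coll : list pset) L :
  (forall p, (forall C, In C coll -> C p) -> P p) ->
  at_least k (fun l => exists x, forall C, In C coll -> C (x, l)) L ->
  k_intersecting P k coll.
Proof.
  intros hsub (S & ndS & _ & lS & hS).
  destruct (choose_points (fun p => forall C, In C coll -> C p) S hS) as (pts & e & hpts).
  assert (lpts : length pts = length S) by (rewrite <- e, length_map; reflexivity).
  exists (firstn k pts); split; [|split].
  - rewrite length_firstn; lia.
  - rewrite <- firstn_map, e.
    rewrite <- (firstn_skipn k S) in ndS; exact (NoDup_app_remove_r _ _ ndS).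
  - intros p ip.
    assert (hp : forall C, In C coll -> C p).
    { apply hpts; rewrite <- (firstn_skipn k pts); apply in_or_app; left; exact ip. }
    split; [apply hsub|]; exact hp.
Qed.

Lemma missing_levels_of_not_k_intersecting P k d (coll : list pset) :
  (forall p, (forall C, In C coll -> C p) -> P p) -> ~ k_intersecting P k coll ->
  at_least (d + 1 - k) (fun l => ~ exists x, forall C, In C coll -> C (x, l)) (seq 1 d).
Proof.
  intros hsub nk.
  destruct (at_least_split k (fun l => exists x, forall C, In C coll -> C (x, l))
              (seq 1 d) (seq_NoDup d 1)) as [h | h].
  - exfalso; exact (nk (k_intersecting_of_common_levels P k coll _ hsub h)).
  - rewrite length_seq in h; exact h.
Qed.

Lemma in_C_equiv_list_sub d P (coll : list pset) :
  coll <> [] -> (forall C, In C coll -> in_C_equiv d P C) ->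
  forall p, (forall C, In C coll -> C p) -> P p.
Proof.
  destruct coll as [|C0 coll]; [congruence|].
  intros _ hC p hp.
  exact (in_C_equiv_sub d P C0 p (hC C0 (or_introl eq_refl)) (hp C0 (or_introl eq_refl))).
Qed.

Lemma k_intersecting_levels P k (coll : list pset) d Q s :
  (forall p, P p -> 1 <= snd p <= d) -> k_intersecting P k coll ->
  (forall l, Q l -> forall x, ~ forall C, In C coll -> C (x, l)) ->
  at_least s Q (seq 1 d) -> k + s <= d.
Proof.
  intros hP (pts & lp & ndp & hp) hQ hs.
  enough (H : length (map snd pts) + s <= length (seq 1 d))
    by (rewrite length_map, length_seq in H; unfold point in *; lia).
  refine (at_least_disjoint_length _ _ _ _ ndp _ _ hs).
  - intros l il; apply in_map_iff in il as (p & <- & ip).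
    destruct (hp p ip) as [Pp _]; apply hP in Pp; apply in_seq; lia.
  - intros l il Ql; apply in_map_iff in il as ([x l'] & e & ip); simpl in e; subst l'.
    exact (hQ l Ql x (proj2 (hp _ ip))).
Qed.

Theorem theorem7 (d : nat) (P : pset) (k : nat)
  (hd : (1 <= d)%nat)
  (hP : forall p, P p -> (1 <= snd p <= d)%nat)
  (hk : (1 <= k <= d)%nat)
  (F : nat -> list pset)
  (hF : forall j, (j < 2 * d - k + 1)%nat ->
          F j <> nil /\ forall C, In C (F j) -> in_C_equiv d P C)
  (hcol : forall sel : nat -> pset,
          (forall j, (j < 2 * d - k + 1)%nat -> In (sel j) (F j)) ->
          k_intersecting P k (map sel (seq 0 (2 * d - k + 1)))) :
  exists j, (j < 2 * d - k + 1)%nat /\ k_intersecting P k (F j).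
Proof.
  set (n := 2 * d - k + 1) in *.
  apply NNPP; intro none.
  set (bad j l := (j < n /\ 1 <= l <= d) /\ ~ exists x, forall C, In C (F j) -> C (x, l)).
  assert (hbad : forall j, In j (seq 0 n) -> at_least (d + 1 - k) (bad j) (seq 1 d)).
  { intros j ij; apply in_seq in ij; destruct (hF j ltac:(lia)) as [ne hC].
    refine (at_least_impl _ _ _ _ (missing_levels_of_not_k_intersecting P k d (F j)
              (in_C_equiv_list_sub d P (F j) ne hC) _) _).
    - intros hj; apply none; exists j; split; [lia | exact hj].
    - intros l il nc; apply in_seq in il; repeat split; auto; lia. }
  assert (hsep : forall l j1 j2, j1 <> j2 -> bad j1 l -> bad j2 l ->
            exists A B, In A (F j1) /\ In B (F j2) /\ forall x, A (x, l) -> B (x, l) -> False).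
  { intros l j1 j2 _ [[h1 hl] n1] [[h2 _] n2].
    destruct (hF j1 h1), (hF j2 h2).
    apply (in_C_equiv_colorful_pair d P l); assumption. }
  assert (hsel0 : forall j, In j (seq 0 n) -> In (List.hd (fun _ => False) (F j)) (F j)).
  { intros j ij; apply in_seq in ij; destruct (hF j ltac:(lia)) as [ne _].
    destruct (F j); [congruence | left; reflexivity]. }
  destruct (greedy_separation pset F bad _ hsep (d + 1 - k) (seq 0 n) (seq 1 d) _
              (seq_NoDup _ _) (seq_NoDup _ _) ltac:(rewrite !length_seq; lia) hsel0 hbad)
    as (sel & hsel & hsep_sel).
  assert (k + (d + 1 - k) <= d); [|lia].
  refine (k_intersecting_levels P k (map sel (seq 0 n)) d _ _ hP _ _ hsep_sel).
  - apply hcol; intros j hj; apply hsel, in_seq; lia.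
  - intros l (j1 & j2 & ij1 & ij2 & sepj) x hx.
    apply (sepj x); apply hx, in_map; assumption.
Qed.
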